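(* For each $\tau\in(0,1)$ and any real-valued random variable $W$ with finite expectation which is not almost surely constant, there exist real-valued random variables $U$ and $V$ with $\mathbb{E} U \neq \mathbb{E} V$ such that \[ \mathbb{P}(W\in C) = (1-\tau)\,\mathbb{P}(U\in C) + \tau\,\mathbb{P}(V\in C) \] for all Borel sets $C\subseteq\mathbb{R}$. Moreover, if $W$ has finite variance, then $U$ and $V$ can be chosen to have finite variances as well. *)

From HB Require Import structures.
From mathcomp Require Export all_boot all_order all_algebra.
From mathcomp Require Export all_classical all_reals all_analysis.
Export Order.TTheory GRing.Theory Num.Theory.

(* Let m = E W, A = {W <= m} and p = P A. Reweighting P by the densities
   1 + tau (1 - p) on A and 1 - tau p off A, resp. 1 - (1 - tau) (1 - p) on A
   and 1 + (1 - tau) p off A, gives probabilities Pa and Pb with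
   P = (1 - tau) Pa + tau Pb; the densities are bounded, so Pa and Pb inherit
   the moments of W. The means of W under Pa and Pb differ by E[W 1_A] - m p,
   which vanishes only if W = m almost surely, since both on A and off A the
   integral of |W - m| is then m p - E[W 1_A] = 0. Finally U and V are W read
   on the two factors of Pa x Pb. *)

From HB Require Import structures.
From mathcomp Require Import measurable_realfun ring lra.
Set Implicit Arguments.
Unset Strict Implicit.
Import numFieldNormedType.Exports.
Local Open Scope classical_set_scope.
Local Open Scope ring_scope.

Section Lfun_powR.
Context d (T : measurableType d) (R : realType) (mu : {measure set T -> \bar R}).
Local Open Scope ereal_scope.

Lemma measurable_powR_norm (f : T -> R) (r : R) : measurable_fun setT f ->
  measurable_fun setT (fun x => (`|f x| `^ r)%:E).
Proof.
move=> mf; apply/measurable_EFinP.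
by apply: (measurableT_comp (measurable_powR _)) => //; exact: measurableT_comp.
Qed.

Lemma Lfun_powRP (f : T -> R) (r : R) : (0 < r)%R ->
  f \in Lfun mu r%:E <->
  measurable_fun setT f /\ \int[mu]_x (`|f x| `^ r)%:E < +oo.
Proof.
move=> r0; rewrite inE; split=> [/andP[]|[mf fin]].
  rewrite !inE /= /finite_norm unlock /= => mf /lty_poweRy fin; split=> //.
  by apply: fin; rewrite invr_eq0 gt_eqF.
by apply/andP; rewrite !inE /= /finite_norm unlock /=; split=> //; exact: poweR_lty.
Qed.

End Lfun_powR.
Arguments Lfun_powRP {d T R mu f r}.

Definition measure_preserving d1 d2 (X : measurableType d1) (Y : measurableType d2)
    (R : realType) (mu : {measure set X -> \bar R}) (nu : {measure set Y -> \bar R})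
    (phi : X -> Y) :=
  measurable_fun setT phi /\ forall S, measurable S -> mu (phi @^-1` S) = nu S.

Section measure_preserving.
Context d1 d2 (X : measurableType d1) (Y : measurableType d2) (R : realType).
Variables (mu : {measure set X -> \bar R}) (nu : {measure set Y -> \bar R}) (phi : X -> Y).
Hypothesis phiP : measure_preserving mu nu phi.
Local Open Scope ereal_scope.

Lemma measure_preserving_ge0_integral (g : Y -> \bar R) :
  measurable_fun setT g -> (forall y, 0 <= g y) ->
  \int[mu]_x g (phi x) = \int[nu]_y g y.
Proof.
case: phiP => mphi phi_nu mg g0.
transitivity (\int[pushforward mu phi]_y g y).
  by rewrite ge0_integral_pushforward// preimage_setT.
by apply: eq_measure_integral => S mS _; exact: phi_nu.
Qed.

Lemma measure_preserving_integral (g : Y -> \bar R) :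
  measurable_fun setT g -> \int[mu]_x g (phi x) = \int[nu]_y g y.
Proof.
move=> mg; rewrite integralE [RHS]integralE.
rewrite -[(fun x => g (phi x))]/(g \o phi) funepos_comp funeneg_comp.
rewrite !measure_preserving_ge0_integral//.
all: try exact: measurable_funepos; try exact: measurable_funeneg.
all: by move=> y; [exact: funepos_ge0 | exact: funeneg_ge0].
Qed.

Lemma measure_preserving_Lfun (f : Y -> R) (r : R) : (0 < r)%R ->
  f \in Lfun nu r%:E -> f \o phi \in Lfun mu r%:E.
Proof.
case: phiP => mphi _ r0 /(Lfun_powRP r0)[mf fin].
apply/(Lfun_powRP r0); split; first exact: measurableT_comp.
rewrite (measure_preserving_ge0_integral (g := fun y => (`|f y| `^ r)%:E))//.
exact: measurable_powR_norm.
Qed.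

End measure_preserving.

Lemma measure_preserving_expectation d1 d2 (X : measurableType d1)
    (Y : measurableType d2) (R : realType) (P : probability X R)
    (Q : probability Y R) (phi : X -> Y) (f : {mfun Y >-> R}) :
  measure_preserving P Q phi -> 'E_P[f \o phi]%E = 'E_Q[f]%E.
Proof.
move=> phiP; rewrite !unlock.
by apply: (measure_preserving_integral phiP); exact/measurable_EFinP.
Qed.

Section product_marginals.
Context d1 d2 (T1 : measurableType d1) (T2 : measurableType d2) (R : realType).
Variables (P1 : probability T1 R) (P2 : probability T2 R).
Local Open Scope ereal_scope.

Lemma measure_preserving_fst : measure_preserving (P1 \x P2) P1 fst.
Proof.
split=> // S mS.
rewrite -setXT; apply: etrans (product_measure1E _ _ mS measurableT) _.
by rewrite -[RHS]mule1; congr (_ * _); exact: probability_setT.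
Qed.

Lemma measure_preserving_snd : measure_preserving (P1 \x P2) P2 snd.
Proof.
split=> // S mS.
rewrite -setTX; apply: etrans (product_measure1E _ _ measurableT mS) _.
by rewrite -[RHS]mul1e; congr (_ * _); exact: probability_setT.
Qed.

End product_marginals.

Section projections_mfun.
Context d1 d2 (T1 : measurableType d1) (T2 : measurableType d2).

HB.instance Definition _ := isMeasurableFun.Build _ _ _ _ (@fst T1 T2) measurable_fst.
HB.instance Definition _ := isMeasurableFun.Build _ _ _ _ (@snd T1 T2) measurable_snd.

End projections_mfun.

Lemma integral_setUv d (T : measurableType d) (R : realType)
    (mu : {measure set T -> \bar R}) (A : set T) (f : T -> \bar R) :
  measurable A -> measurable_fun setT f ->
  (\int[mu]_x f x = \int[mu]_(x in A) f x + \int[mu]_(x in ~` A) f x)%E.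
Proof.
move=> mA mf; rewrite -(setUv A) integral_setU ?setUv//; first exact: measurableC.
exact/disj_setPCl.
Qed.

Section reweight.
Context d (T : measurableType d) (R : realType) (P : probability T R).
Variables (A : set T) (mA : measurable A).
Local Open Scope ereal_scope.

Section weights.
Variables a b : {nonneg R}.

Definition reweight :=
  measure_add (mscale a (mrestr P mA)) (mscale b (mrestr P (measurableC mA))).

HB.instance Definition _ := Measure.on reweight.

Lemma reweightE S :
  reweight S = a%:num%:E * P (S `&` A) + b%:num%:E * P (S `&` ~` A).
Proof. by rewrite /reweight measure_addE. Qed.

Lemma reweight_subset S : S `<=` A -> reweight S = a%:num%:E * P S.
Proof.
move=> SA; rewrite reweightE setIidl// (subsets_disjoint _ _).1//.
by rewrite measure0 mule0 adde0.
Qed.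

Lemma reweight_subsetC S : S `<=` ~` A -> reweight S = b%:num%:E * P S.
Proof.
move=> SAc; have := (subsets_disjoint _ _).1 SAc; rewrite setCK => SA0.
rewrite reweightE (setIidl SAc) SA0.
by rewrite measure0 mule0 add0e.
Qed.

Lemma ge0_integral_reweight (f : T -> \bar R) :
  measurable_fun setT f -> (forall t, 0 <= f t) ->
  \int[reweight]_t f t =
  a%:num%:E * \int[P]_(t in A) f t + b%:num%:E * \int[P]_(t in ~` A) f t.
Proof.
move=> mf f0; have mAc := measurableC mA.
rewrite (integral_setUv _ mA mf).
rewrite (eq_measure_integral (mscale a P)); last first.
  by move=> S mS SA; exact: reweight_subset.
rewrite [X in _ + X](eq_measure_integral (mscale b P)); last first.
  by move=> S mS SAc; exact: reweight_subsetC.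
by rewrite !ge0_integral_mscale//; exact: measurable_funTS.
Qed.

Lemma integral_reweight (f : T -> \bar R) : P.-integrable setT f ->
  \int[reweight]_t f t =
  a%:num%:E * \int[P]_(t in A) f t + b%:num%:E * \int[P]_(t in ~` A) f t.
Proof.
move=> intf; have mf := measurable_int _ intf; have mAc := measurableC mA.
rewrite integralE [X in _ = _ * X + _]integralE [X in _ = _ + _ * X]integralE.
rewrite ge0_integral_reweight; last 2 first.
- exact: measurable_funepos.
- by move=> t; exact: funepos_ge0.
rewrite ge0_integral_reweight; last 2 first.
- exact: measurable_funeneg.
- by move=> t; exact: funeneg_ge0.
have intA : P.-integrable A f by exact: integrableS intf.
have intAc : P.-integrable (~` A) f by exact: integrableS intf.
rewrite -(fineK (integrable_fin_num mA (integrable_funepos mA intA))).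
rewrite -(fineK (integrable_fin_num mA (integrable_funeneg mA intA))).
rewrite -(fineK (integrable_fin_num mAc (integrable_funepos mAc intAc))).
rewrite -(fineK (integrable_fin_num mAc (integrable_funeneg mAc intAc))).
by rewrite -!EFinM -!EFinD; congr EFin; ring.
Qed.

Lemma Lfun_reweight (f : T -> R) (r : R) : (0 < r)%R ->
  f \in Lfun P r%:E -> f \in Lfun reweight r%:E.
Proof.
move=> r0 /(Lfun_powRP r0)[mf fin]; apply/(Lfun_powRP r0); split=> //.
have g0 t : 0 <= (`|f t| `^ r)%:E by rewrite lee_fin powR_ge0.
have mg := measurable_powR_norm r mf.
have finD D : measurable D -> \int[P]_(t in D) (`|f t| `^ r)%:E < +oo.
  by move=> mD; apply: le_lt_trans fin; apply: ge0_subset_integral.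
rewrite ge0_integral_reweight//.
by apply: lte_add_pinfty; apply: lte_mul_pinfty => //;
  [exact: finD mA | exact: finD (measurableC mA)].
Qed.

Section probability.
Hypothesis weights1 : a%:num%:E * P A + b%:num%:E * P (~` A) = 1.

Let reweight_setT : reweight setT = 1.
Proof. by rewrite reweightE !setTI. Qed.

HB.instance Definition _ :=
  Measure_isProbability.Build _ _ _ reweight reweight_setT.

Definition reweight_probability : probability T R := reweight.

End probability.

End weights.

Lemma reweight_convex (tau : R) (a b a' b' : {nonneg R}) :
    ((1 - tau) * a%:num + tau * a'%:num = 1)%R ->
    ((1 - tau) * b%:num + tau * b'%:num = 1)%R ->
  forall S, measurable S ->
  P S = (1 - tau)%:E * reweight a b S + tau%:E * reweight a' b' S.
Proof.
move=> ha hb S mS; rewrite !reweightE.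
have -> : P S = P (S `&` A) + P (S `&` ~` A).
  by rewrite (measureDI P mS mA) setDE addeC.
have fin_A : P (S `&` A) \is a fin_num by rewrite fin_num_measure//; exact: measurableI.
have fin_Ac : P (S `&` ~` A) \is a fin_num.
  by rewrite fin_num_measure//; apply: measurableI => //; exact: measurableC.
rewrite -(fineK fin_A) -(fineK fin_Ac) -!EFinM -!EFinD; congr EFin.
set u := fine _; set v := fine _.
transitivity (((1 - tau) * a%:num + tau * a'%:num) * u +
              ((1 - tau) * b%:num + tau * b'%:num) * v)%R; last by ring.
by rewrite ha hb !mul1r.
Qed.

End reweight.

Section deviation_from_cst.
Context d (T : measurableType d) (R : realType) (P : probability T R).
Variables (X : {RV P >-> R}) (m : R).
Hypothesis X1 : (X : T -> R) \in Lfun P 1.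
Local Open Scope ereal_scope.

Let intX : P.-integrable setT (EFin \o X).
Proof. exact/Lfun1_integrable. Qed.

Lemma integral_abs_sub_below D : measurable D -> (forall t, D t -> X t <= m)%R ->
  \int[P]_(t in D) `|(X t - m)%:E| = m%:E * P D - \int[P]_(t in D) (X t)%:E.
Proof.
move=> mD XDm; have intXD := integrableS measurableT mD (subsetT D) intX.
transitivity (\int[P]_(t in D) ((cst m t)%:E - (X t)%:E)).
  apply: eq_integral => t /[!inE] Dt.
  by rewrite abse_EFin distrC ger0_norm ?subr_ge0 ?XDm.
rewrite integralB_EFin//; last exact: finite_measure_integrable_cst.
by congr (_ - _); exact: (integral_cst P _ m%:E).
Qed.

Lemma integral_abs_sub_above D : measurable D -> (forall t, D t -> m <= X t)%R ->
  \int[P]_(t in D) `|(X t - m)%:E| = \int[P]_(t in D) (X t)%:E - m%:E * P D.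
Proof.
move=> mD XDm; have intXD := integrableS measurableT mD (subsetT D) intX.
transitivity (\int[P]_(t in D) ((X t)%:E - (cst m t)%:E)).
  by apply: eq_integral => t /[!inE] Dt; rewrite abse_EFin ger0_norm ?subr_ge0 ?XDm.
rewrite integralB_EFin//; last exact: finite_measure_integrable_cst.
by congr (_ - _); exact: (integral_cst P _ m%:E).
Qed.

Lemma ae_eq_mean_of_integral_below_mean : 'E_P[X] = m%:E ->
  \int[P]_(t in X @^-1` `]-oo, m]) (X t)%:E - 'E_P[X] * P (X @^-1` `]-oo, m]) = 0 ->
  {ae P, forall t, X t = m}.
Proof.
rewrite expectation_def => EX; rewrite EX; set A := X @^-1` _.
have mXE : measurable_fun setT (EFin \o X) := measurable_int _ intX.
have mA : measurable A by rewrite -[A]setTI; exact: measurable_funPT.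
have mAc := measurableC mA.
have fin_IA : \int[P]_(t in A) (X t)%:E \is a fin_num.
  by apply: integrable_fin_num => //; exact: integrableS intX.
move=> /eqP; rewrite sube_eq ?add0e// => /eqP IA.
have below t : A t -> (X t <= m)%R by rewrite /A /= in_itv.
have above t : (~` A) t -> (m <= X t)%R.
  by rewrite /A /= in_itv /= => /negP; rewrite -ltNge => /ltW.
have IAc : \int[P]_(t in ~` A) (X t)%:E = m%:E * P (~` A).
  have intXAc := integrableS measurableT mAc (subsetT _) intX.
  move: EX; rewrite (integral_setUv _ mA mXE) IA.
  rewrite probability_setC// -(fineK (fin_num_measure P A mA)).
  rewrite -(fineK (integrable_fin_num mAc intXAc)) -!EFinM -EFinD.
  by move=> /eqP; rewrite eqe => /eqP hm; congr EFin; nra.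
have mdev : measurable_fun setT (fun t => (X t - m)%:E).
  by apply/measurable_EFinP/measurable_funB.
have dev0 : \int[P]_t `|(X t - m)%:E| = 0.
  rewrite (integral_setUv _ mA); last exact: measurableT_comp mdev.
  rewrite integral_abs_sub_below// integral_abs_sub_above// IA IAc.
  by rewrite !subee ?adde0// fin_numM// fin_num_measure.
have := (ae_eq_integral_abs P measurableT mdev).1 dev0.
by apply: filterS => t /(_ I) /eqP; rewrite eqe subr_eq0 => /eqP.
Qed.

End deviation_from_cst.

Section reweight_decomposition.
Context d (T : measurableType d) (R : realType) (P : probability T R).
Variables (A : set T) (mA : measurable A) (tau : R).
Hypothesis tau01 : 0 < tau < 1.
Local Open Scope ereal_scope.

Lemma reweight_decomposition : exists Pa Pb : probability T R,
  [/\ forall S, measurable S -> P S = (1 - tau)%:E * Pa S + tau%:E * Pb S,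
      forall (f : T -> R) (r : R), (0 < r)%R -> f \in Lfun P r%:E ->
        f \in Lfun Pa r%:E /\ f \in Lfun Pb r%:E &
      forall f : {RV P >-> R}, (f : T -> R) \in Lfun P 1 ->
        'E_Pa[f] - 'E_Pb[f] = \int[P]_(t in A) (f t)%:E - 'E_P[f] * P A].
Proof.
have mAc := measurableC mA.
set p := fine (P A); have PAE : P A = p%:E by rewrite fineK// fin_num_measure.
have /andP[p0 p1] : (0 <= p <= 1)%R.
  by rewrite -!lee_fin -PAE measure_ge0 probability_le1.
case/andP: tau01 => tau0 tau1.
have a0 : (0 <= 1 + tau * (1 - p))%R by nra.
have b0 : (0 <= 1 - tau * p)%R by nra.
have a'0 : (0 <= 1 - (1 - tau) * (1 - p))%R by nra.
have b'0 : (0 <= 1 + (1 - tau) * p)%R by nra.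
have PAcE : P (~` A) = (1 - p)%:E by rewrite probability_setC// PAE.
have ha : (NngNum a0)%:num%:E * P A + (NngNum b0)%:num%:E * P (~` A) = 1.
  by rewrite PAE PAcE -!EFinM -EFinD; congr EFin; rewrite /=; ring.
have hb : (NngNum a'0)%:num%:E * P A + (NngNum b'0)%:num%:E * P (~` A) = 1.
  by rewrite PAE PAcE -!EFinM -EFinD; congr EFin; rewrite /=; ring.
exists (reweight_probability mA ha), (reweight_probability mA hb); split.
- by move=> S mS; apply: reweight_convex => //=; ring.
- by move=> f r r0 fr; split; exact: Lfun_reweight.
move=> f /Lfun1_integrable intf; rewrite !unlock !integral_reweight//.
have intA := integrableS measurableT mA (subsetT A) intf.
have intAc := integrableS measurableT mAc (subsetT _) intf.
rewrite (integral_setUv _ mA (measurable_int _ intf)).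
rewrite PAE -(fineK (integrable_fin_num mA intA)).
rewrite -(fineK (integrable_fin_num mAc intAc)).
by rewrite -!EFinM -!EFinD; congr EFin; rewrite /=; ring.
Qed.

End reweight_decomposition.

Theorem proposition1p3 (R : realType) (d : measure_display) (T : measurableType d)
  (P : probability T R) (tau : R) (W : {RV P >-> R}) :
  0 < tau < 1 ->
  (W : T -> R) \in Lfun P 1%:E ->
  ~ (exists c : R, {ae P, forall w, W w = c}) ->
  (exists (d' : measure_display) (T' : measurableType d')
          (Q : probability T' R) (U V : {RV Q >-> R}),
     (U : T' -> R) \in Lfun Q 1%:E /\ (V : T' -> R) \in Lfun Q 1%:E /\
     ('E_Q[U] != 'E_Q[V])%E /\
     (forall C : set R, measurable C ->
        P (W @^-1` C) = ((1 - tau)%:E * Q (U @^-1` C) + tau%:E * Q (V @^-1` C))%E))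
  /\
  ((W : T -> R) \in Lfun P 2%:E ->
   exists (d' : measure_display) (T' : measurableType d')
          (Q : probability T' R) (U V : {RV Q >-> R}),
     (U : T' -> R) \in Lfun Q 2%:E /\ (V : T' -> R) \in Lfun Q 2%:E /\
     ('E_Q[U] != 'E_Q[V])%E /\
     (forall C : set R, measurable C ->
        P (W @^-1` C) = ((1 - tau)%:E * Q (U @^-1` C) + tau%:E * Q (V @^-1` C))%E)).
Proof.
move=> tau01 W1 W_nonconst.
set m := fine ('E_P[W])%E.
have EW : ('E_P[W] = m%:E)%E by rewrite fineK// expectation_fin_num.
set A := W @^-1` `]-oo, m].
have mA : measurable A by rewrite -[A]setTI; exact: measurable_funPT.
have [Pa [Pb [P_mix Lfun_ab E_ab]]] := reweight_decomposition P mA tau01.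
pose Q : probability _ R := (Pa \x Pb)%E.
have fstP : measure_preserving Q Pa fst by exact: measure_preserving_fst.
have sndP : measure_preserving Q Pb snd by exact: measure_preserving_snd.
have Lfun_UV r : 0 < r -> (W : T -> R) \in Lfun P r%:E ->
    W \o fst \in Lfun Q r%:E /\ W \o snd \in Lfun Q r%:E.
  move=> r0 /(Lfun_ab _ _ r0)[Wa Wb]; split.
  - exact (measure_preserving_Lfun fstP r0 Wa).
  - exact (measure_preserving_Lfun sndP r0 Wb).
have E_neq : ('E_Q[(W \o fst)] != 'E_Q[(W \o snd)])%E.
  rewrite (measure_preserving_expectation _ fstP) (measure_preserving_expectation _ sndP).
  apply: contra_notN W_nonconst => /eqP E_eq; exists m.
  apply: (ae_eq_mean_of_integral_below_mean W1 EW).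
  have [_ Wb1] := Lfun_ab _ _ ltr01 W1.
  by rewrite -E_ab// E_eq subee// expectation_fin_num.
have law C : measurable C -> P (W @^-1` C) =
    ((1 - tau)%:E * Q ((W \o fst) @^-1` C) + tau%:E * Q ((W \o snd) @^-1` C))%E.
  move=> mC; have mWC : measurable (W @^-1` C).
    by rewrite -[_ @^-1` _]setTI; exact: measurable_funPT.
  by rewrite P_mix// -(fstP.2 _ mWC) -(sndP.2 _ mWC).
split=> [|W2]; exists _, _, Q, (W \o fst), (W \o snd).
  by have [] := Lfun_UV _ ltr01 W1; do ?split.
by have [] := Lfun_UV _ (ltr0n _ 2) W2; do ?split.
Qed.
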